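(* Assume $d\ge2$. Then $a^*_{d-2}+a^*_{d-1}=a^*_{d-1}+a^*_d$ if and only if $r=s$.
   Context: Fix an integer $d\ge0$ and $r,s\in(-1,\infty)$. Write $(x)_i=x(x+1)\cdots(x+i-1)$, $(x)_0=1$. For $0\le i\le d$ put $\theta^*_i=i$. Put $b^*_i=\frac{(d-i)(i-d-s)(2d-2i+r+s+2)_i}{(2d-2i+r+s)_{i+1}}$ ($0\le i\le d-1$), $c^*_i=\frac{i(i-d-r-1)(d-i+r+s+1)_{d-i}}{(d-i+r+s+2)_{d-i+1}}$ ($1\le i\le d$), $b^*_d=c^*_0=0$, and $a^*_i=\theta^*_0-b^*_i-c^*_i$ for $0\le i\le d$. *)

From mathcomp Require Import all_boot all_order all_algebra.
Set Implicit Arguments. Unset Strict Implicit. Unset Printing Implicit Defensive.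
Import Order.TTheory GRing.Theory Num.Theory.
Local Open Scope ring_scope.

Definition poch {R : pzRingType} (x : R) (i : nat) : R :=
  \prod_(k < i) (x + k%:R).

Definition thetas {R : pzRingType} (i : nat) : R := i%:R.

Definition bs {R : fieldType} (d : nat) (r s : R) (i : nat) : R :=
  if i == d then 0 else
  (d%:R - i%:R) * (i%:R - d%:R - s)
  * poch (2 * d%:R - 2 * i%:R + r + s + 2) i
  / poch (2 * d%:R - 2 * i%:R + r + s) i.+1.

Definition cs {R : fieldType} (d : nat) (r s : R) (i : nat) : R :=
  if i == 0%N then 0 else
  i%:R * (i%:R - d%:R - r - 1)
  * poch (d%:R - i%:R + r + s + 1) (d - i)
  / poch (d%:R - i%:R + r + s + 2) (d - i).+1.

Definition as_ {R : fieldType} (d : nat) (r s : R) (i : nat) : R :=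
  thetas 0 - bs d r s i - cs d r s i.

From mathcomp Require Import all_boot all_order all_algebra.
From mathcomp Require Import ring lra.
Import Order.TTheory GRing.Theory Num.Theory.
Local Open Scope ring_scope.

(* Cancelling a*_(d-1), the claim is a*_(d-2) = a*_d.  Both sides have closed
   forms (for b*_(d-2) via (x+2)_n / (x)_(n+1) = (x+n+1) / (x(x+1))), and
   a*_(d-2) - a*_d = 2(r+s+3)(2d+r+s+2) / ((r+s+2)(r+s+4)(r+s+6)) * (s - r),
   whose cofactor is positive as soon as r + s > -2. *)

Lemma poch0 (R : pzRingType) (x : R) : poch x 0 = 1.
Proof. by rewrite /poch big_ord0. Qed.

Lemma pochSr (R : pzRingType) (x : R) n : poch x n.+1 = poch x n * (x + n%:R).
Proof. by rewrite /poch big_ord_recr. Qed.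

Lemma pochS2l (R : comPzRingType) (x : R) n :
  poch x n.+2 = x * (x + 1) * poch (x + 2) n.
Proof.
rewrite /poch !big_ord_recl /= addr0 mulrA; congr (_ * _).
by apply: eq_bigr => i _; rewrite /bump /= !add1n -addn2 natrD addrA addrAC.
Qed.

Lemma poch_gt0 (R : numDomainType) (x : R) n : 0 < x -> 0 < poch x n.
Proof. by move=> x_gt0; apply: prodr_gt0 => i _; rewrite ltr_wpDr. Qed.

Lemma poch_shift2_ratio (R : fieldType) (x : R) n : poch x n.+2 != 0 ->
  poch (x + 2) n / poch x n.+1 = (x + n%:R + 1) / (x * (x + 1)).
Proof.
move=> nz_p.
have /andP[nz_x nz_x1] : (x != 0) && (x + 1 != 0).
  by move: nz_p; rewrite pochS2l !mulf_eq0 !negb_or => /andP[].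
have nz_last : x + n%:R + 1 != 0.
  by move: nz_p; rewrite pochSr mulf_eq0 negb_or -addn1 natrD addrA => /andP[].
have -> : poch (x + 2) n = poch x n.+2 / (x * (x + 1)).
  by rewrite pochS2l mulrC mulKf // mulf_neq0.
have -> : poch x n.+1 = poch x n.+2 / (x + n%:R + 1).
  by rewrite [poch x n.+2]pochSr -natr1 addrA mulfK.
by field; rewrite nz_x nz_x1 nz_last nz_p.
Qed.

Lemma bs_dsub2 (R : realFieldType) n (r s : R) : 0 < r + s + 4 ->
  bs n.+2 r s n = - 2 * (s + 2) * (r + s + n%:R + 5) / ((r + s + 4) * (r + s + 5)).
Proof.
move=> rs4_gt0; rewrite /bs ltn_eqF //.
have -> : 2 * n.+2%:R - 2 * n%:R + r + s = r + s + 4 :> R.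
  by rewrite -addn2 natrD; ring.
rewrite -mulrA poch_shift2_ratio; last by rewrite lt0r_neq0 ?poch_gt0.
rewrite -addn2 natrD.
by field; rewrite !gt_eqF //; lra.
Qed.

Lemma cs_dsub2 (R : realFieldType) n (r s : R) : 0 < r + s + 4 ->
  cs n.+2 r s n = - n%:R * (r + 3) * (r + s + 3) / ((r + s + 5) * (r + s + 6)).
Proof.
move=> rs4_gt0; rewrite /cs; case: eqP => [->|_]; first by rewrite oppr0 !mul0r.
have -> : (n.+2 - n = 2)%N by rewrite -addn2 addKn.
rewrite !pochSr !poch0 -addn2 natrD.
by field; rewrite !gt_eqF //; lra.
Qed.

Lemma as_last (R : fieldType) d (r s : R) :
  as_ d r s d = d%:R * (r + 1) / (r + s + 2).
Proof.
rewrite /as_ /bs /cs /thetas eqxx subnn; case: eqP => [->|_].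
  by rewrite !mul0r !subr0.
rewrite pochSr !poch0 !subrr !add0r mul1r addr0 mulr1 -mulNr.
by congr (_ / _); ring.
Qed.

Lemma as_dsub2_sub_last (R : realFieldType) n (r s : R) : 0 < r + s + 2 ->
  as_ n.+2 r s n - as_ n.+2 r s n.+2 =
  2 * (r + s + 3) * (2 * n%:R + r + s + 6) / ((r + s + 2) * (r + s + 4) * (r + s + 6))
  * (s - r).
Proof.
move=> rs2_gt0; rewrite as_last /as_ bs_dsub2 ?cs_dsub2 /thetas; try lra.
by rewrite -addn2 natrD; field; rewrite !gt_eqF //; lra.
Qed.

Lemma eq_as_dsub2_last (R : realFieldType) n (r s : R) : 0 < r + s + 2 ->
  (as_ n.+2 r s n == as_ n.+2 r s n.+2) = (r == s).
Proof.
move=> rs2_gt0; have n_ge0 : 0 <= n%:R :> R := ler0n R n.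
rewrite -subr_eq0 as_dsub2_sub_last // mulf_eq0 gt_eqF /=.
  by rewrite subr_eq0 eq_sym.
by rewrite !(divr_gt0, mulr_gt0) //; lra.
Qed.

Theorem lemma2p8 (R : realFieldType) (d : nat) (r s : R)
  (hd : (2 <= d)%N) (hr : -1 < r) (hs : -1 < s) :
  as_ d r s (d - 2) + as_ d r s (d - 1) = as_ d r s (d - 1) + as_ d r s d
  <-> r = s.
Proof.
case: d hd => [|[|n]] // _; rewrite subn2 subn1 /= [LHS]addrC.
have rs2_gt0 : 0 < r + s + 2 by lra.
split => [/addrI/eqP | rs]; first by rewrite eq_as_dsub2_last // => /eqP.
by congr (_ + _); apply/eqP; rewrite eq_as_dsub2_last // rs.
Qed.
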